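(* Consider the integer linear program in variables $\mathbf{c}=(c_1,\ldots,c_d)\in\mathbb{Z}^d$: $$\text{maximize } c_1+\cdots+c_d-1 \quad\text{subject to}\quad 0\le c_i\le nr\ (i\in[d]),\qquad \sum_{i\in S}c_i\le\sum_{\lambda\cap S\neq\emptyset}|N_\lambda|\ \ (S\subseteq[d]).$$ Let $\mathbf{c}^{(0)}=0\in\mathbb{Z}^d$. For $t=1,\ldots,r$, let $\mathbf{c}^{(t)}\in\mathbb{Z}^d$ satisfy the following, where $\mathbf{c}^{(t)}$ is always chosen to satisfy all constraints $\sum_{i\in S}c^{(t)}_i\le\sum_{\lambda\cap S\ne\emptyset}|N_\lambda|$: - $c_i^{(t-1)}\le c_i^{(t)}\le c_i^{(t-1)}+n$ for all $i\in[d]$; - whenever $c_i^{(t)}<c_i^{(t-1)}+n$, there exists $S\subseteq[d]$ with $i\in S$ and $\sum_{j\in S}c_j^{(t)}=\sum_{\lambda\cap S\neq\emptyset}|N_\lambda|$. Then $\mathbf{c}^{(r)}$ is an optimal solution of the integer linear program.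
   Context: Let $[d]=\{1,\ldots,d\}$, and let $n,r,d$ be positive integers. For a partition $\lambda$ of $d$ with at most $n$ parts, $N_\lambda$ is the set of index vectors $(i_1,\ldots,i_n)\in\mathbb{Z}_{\ge0}^n$ whose multiset of nonzero entries equals $\lambda$. The sum $\sum_{\lambda\cap S\neq\emptyset}$ ranges over the partitions $\lambda$ of $d$ of length at most $n$ having at least one part in $S$. *)

From HB Require Import structures.
From mathcomp Require Import all_boot all_order all_algebra.
Set Implicit Arguments. Unset Strict Implicit. Unset Printing Implicit Defensive.
Import Order.TTheory GRing.Theory Num.Theory.

(* Conventions: [d] = {1,...,d} is represented by 'I_d, the ordinal i standing
   for the integer i+1.  A partition of d with at most n parts is represented
   (standardly) as a nonincreasing n-tuple of nonnegative integers summing to d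
   (padded with zeros); its parts are its nonzero entries.  Every entry is
   <= d, hence the tuple lives in n.-tuple 'I_d.+1. *)

Definition is_partition (n d : nat) (la : n.-tuple 'I_d.+1) : bool :=
  sorted (fun a b : nat => b <= a) [seq val x | x <- la] &&
  (\sum_(x <- la) val x == d).

Definition parts (n d : nat) (la : n.-tuple 'I_d.+1) : seq nat :=
  [seq k <- [seq val x | x <- la] | k != 0].

Definition nz_entries (n d : nat) (v : {ffun 'I_n -> 'I_d.+1}) : seq nat :=
  [seq k <- [seq val (v i) | i <- enum 'I_n] | k != 0].

(* N_lambda : index vectors (i_1,...,i_n) in Z_{>=0}^n whose multiset of nonzero
   entries equals lambda.  Such vectors have all entries <= d (they are parts of
   lambda or 0), so they are all represented in {ffun 'I_n -> 'I_d.+1}. *)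
Definition N_ (n d : nat) (la : n.-tuple 'I_d.+1) : {set {ffun 'I_n -> 'I_d.+1}} :=
  [set v | perm_eq (nz_entries v) (parts la)].

(* lambda \cap S <> empty, for S a subset of [d] (ordinal i <-> integer i+1) *)
Definition meets (n d : nat) (la : n.-tuple 'I_d.+1) (S : {set 'I_d}) : bool :=
  has (fun k => [exists i in S, k == (val i).+1]) (parts la).

Definition rhs (n d : nat) (S : {set 'I_d}) : int :=
  (\sum_(la : n.-tuple 'I_d.+1 | is_partition la && meets la S) #|N_ la|)%:Z.

Local Open Scope ring_scope.

Definition subset_constraints (n d : nat) (c : 'I_d -> int) : Prop :=
  forall S : {set 'I_d}, \sum_(i in S) c i <= rhs n S.

Definition ilp_feasible (n r d : nat) (c : 'I_d -> int) : Prop :=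
  (forall i, 0 <= c i <= (n * r)%:Z) /\ subset_constraints n c.

Definition ilp_objective (d : nat) (c : 'I_d -> int) : int :=
  \sum_(i < d) c i - 1.

Definition ilp_optimal (n r d : nat) (c : 'I_d -> int) : Prop :=
  ilp_feasible n r c /\
  forall c' : 'I_d -> int, ilp_feasible n r c' -> ilp_objective c' <= ilp_objective c.

(* The right-hand side S |-> rhs n S is submodular with rhs set0 = 0, because S |-> [lambda meets S]
   is.  Hence, for a vector c satisfying all subset constraints, the tight sets are closed under
   union and there is a largest tight set T.  Along the greedy process a coordinate i either grows
   by n at every step, ending at n r, or is blocked at some step t by a set tight for c^(t);
   coordinates only increase, so that set stays tight for c^(r) and lies in T.  Thus c^(r) = n r
   off T, while on T any feasible c' satisfies sum_T c' <= rhs T = sum_T c^(r). *)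
From mathcomp Require Import all_boot all_order all_algebra.
From mathcomp Require Import zify lra.
Set Implicit Arguments. Unset Strict Implicit. Unset Printing Implicit Defensive.
Import Order.TTheory GRing.Theory Num.Theory.
Local Open Scope ring_scope.

Lemma sum_setU_setI (T : finType) (c : T -> int) (A B : {set T}) :
  \sum_(i in A :|: B) c i + \sum_(i in A :&: B) c i =
  \sum_(i in A) c i + \sum_(i in B) c i.
Proof.
rewrite !(big_mkcond (fun i => i \in _)) -!big_split; apply: eq_bigr => i _ /=.
by rewrite in_setU in_setI; case: (i \in A); case: (i \in B); rewrite /= ?addr0 ?add0r.
Qed.

Section TightSets.

Variables (T : finType) (f : {set T} -> int).
Hypothesis f_set0 : f set0 = 0.
Hypothesis f_submod : forall A B, f (A :|: B) + f (A :&: B) <= f A + f B.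

Definition bounded_by (c : T -> int) : Prop := forall S : {set T}, \sum_(i in S) c i <= f S.

Definition tight (c : T -> int) (S : {set T}) : bool := \sum_(i in S) c i == f S.

Definition max_tight (c : T -> int) : {set T} := \bigcup_(S | tight c S) S.

Variable c : T -> int.
Hypothesis c_bounded : bounded_by c.

Lemma tight_setU A B : tight c A -> tight c B -> tight c (A :|: B).
Proof.
move=> /eqP tA /eqP tB; have := sum_setU_setI c A B.
have := f_submod A B; have := c_bounded (A :|: B); have := c_bounded (A :&: B).
rewrite /tight; lra.
Qed.

Lemma tight_max_tight : tight c (max_tight c).
Proof.
by apply: (big_ind (tight c)) => //; [rewrite /tight big_set0 f_set0 | apply: tight_setU].
Qed.

Lemma tight_sub_max_tight S : tight c S -> S \subset max_tight c.
Proof. exact: bigcup_sup. Qed.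

Lemma tight_le c' S :
  bounded_by c' -> (forall i, c i <= c' i) -> tight c S -> tight c' S.
Proof.
move=> c'_bounded le_cc' /eqP tS; rewrite /tight eq_le c'_bounded -tS.
exact: ler_sum.
Qed.

Lemma sum_le_max_tight c' :
  bounded_by c' -> (forall i, i \notin max_tight c -> c' i <= c i) ->
  \sum_i c' i <= \sum_i c i.
Proof.
move=> c'_bounded le_out.
rewrite (bigID (mem (max_tight c))) [leRHS](bigID (mem (max_tight c))) /=.
apply: lerD; last exact: ler_sum.
by rewrite (eqP tight_max_tight); apply: c'_bounded.
Qed.

End TightSets.

Lemma meets_setU n d (la : n.-tuple 'I_d.+1) (A B : {set 'I_d}) :
  meets la (A :|: B) = meets la A || meets la B.
Proof.
rewrite /meets -has_predU; apply: eq_has => k /=.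
apply/existsP/orP => [[i /andP[]]|[] /existsP[i /andP[iS ik]]].
- by rewrite in_setU => /orP[] iS ik; [left | right]; apply/existsP; exists i; rewrite iS.
- by exists i; rewrite in_setU iS.
- by exists i; rewrite in_setU iS orbT.
Qed.

Lemma meets_sub n d (la : n.-tuple 'I_d.+1) (A B : {set 'I_d}) :
  A \subset B -> meets la A -> meets la B.
Proof.
move=> sAB; apply: sub_has => k /existsP[i /andP[iA ik]].
by apply/existsP; exists i; rewrite ik (subsetP sAB).
Qed.

Lemma meets_set0 n d (la : n.-tuple 'I_d.+1) : meets la set0 = false.
Proof. by apply/hasPn => k _; apply/existsP => -[i]; rewrite in_set0. Qed.

Lemma rhsE n d (S : {set 'I_d}) :
  rhs n S = (\sum_(la : n.-tuple 'I_d.+1 | is_partition la) meets la S * #|N_ la|)%N%:Z.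
Proof.
by rewrite /rhs big_mkcondr; congr Posz; apply: eq_bigr => la _; case: meets; rewrite ?mul1n.
Qed.

Lemma rhs_set0 n d : rhs n (set0 : {set 'I_d}) = 0.
Proof. by rewrite rhsE big1 // => la _; rewrite meets_set0. Qed.

Lemma rhs_submod n d (A B : {set 'I_d}) :
  rhs n (A :|: B) + rhs n (A :&: B) <= rhs n A + rhs n B.
Proof.
rewrite !rhsE -!PoszD lez_nat -!big_split /=; apply: leq_sum => la _.
rewrite meets_setU.
have /implyP := @meets_sub _ _ la _ _ (subsetIl A B).
have /implyP := @meets_sub _ _ la _ _ (subsetIr A B).
by case: (meets la A); case: (meets la B); case: (meets la (A :&: B)) => //=; lia.
Qed.

Section Trajectory.

Variables (I : Type) (n r : nat) (cs : nat -> I -> int).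
Hypothesis cs0 : forall i, cs 0%N i = 0.
Hypothesis cs_step : forall t i, (t < r)%N -> cs t i <= cs t.+1 i <= cs t i + n%:Z.

Lemma cs_le t t' i : (t <= t' <= r)%N -> cs t i <= cs t' i.
Proof.
elim: t' => [|t' IH] /andP[le_tt' le_t'r]; first by move: le_tt'; rewrite leqn0 => /eqP->.
case: (ltngtP t t'.+1) le_tt' => // [lt_tt' _ | -> //].
apply: le_trans (IH _) _; first by rewrite -ltnS lt_tt' ltnW.
by case/andP: (cs_step i le_t'r).
Qed.

Lemma cs_ge0 t i : (t <= r)%N -> 0 <= cs t i.
Proof. by move=> tr; rewrite -(cs0 i); apply: cs_le. Qed.

Lemma cs_full_or_blocked t i : (t <= r)%N ->
  cs t i = (t * n)%N%:Z \/ exists2 t', (1 <= t' <= t)%N & cs t' i < cs t'.-1 i + n%:Z.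
Proof.
elim: t => [|t IH] tr; first by left; rewrite cs0.
have /andP[_ step_le] := cs_step i tr.
case: (IH (ltnW tr)) => [full | [t' t'_range blocked]]; last first.
  by right; exists t' => //; lia.
case: (ltrP (cs t.+1 i) (cs t i + n%:Z)) => [blocked | step_ge].
  by right; exists t.+1 => //; rewrite leqnn.
by left; apply/eqP; rewrite eq_le mulSn PoszD addrC -full step_le step_ge.
Qed.

Lemma cs_le_mul t i : (t <= r)%N -> cs t i <= (t * n)%N%:Z.
Proof.
elim: t => [|t IH] tr; first by rewrite cs0.
have /andP[_ step_le] := cs_step i tr.
by rewrite (le_trans step_le) // mulSn PoszD [leRHS]addrC lerD2r IH // ltnW.
Qed.

End Trajectory.

Theorem theorem5p4 (n r d : nat) (hn : (0 < n)%N) (hr : (0 < r)%N) (hd : (0 < d)%N)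
  (cs : nat -> 'I_d -> int)
  (h0 : forall i, cs 0%N i = 0)
  (hfeas : forall t, (1 <= t <= r)%N -> subset_constraints n (cs t))
  (hstep : forall t, (1 <= t <= r)%N -> forall i,
      cs t.-1 i <= cs t i <= cs t.-1 i + n%:Z)
  (htight : forall t, (1 <= t <= r)%N -> forall i,
      cs t i < cs t.-1 i + n%:Z ->
      exists S : {set 'I_d}, i \in S /\ \sum_(j in S) cs t j = rhs n S) :
  ilp_optimal n r (cs r).
Proof.
have cs_step t i : (t < r)%N -> cs t i <= cs t.+1 i <= cs t i + n%:Z.
  by move=> tr; exact: hstep t.+1 tr i.
have cr_bounded : bounded_by (@rhs n d) (cs r) by apply: hfeas; rewrite hr leqnn.
have cr_full i : i \notin max_tight (@rhs n d) (cs r) -> cs r i = (n * r)%N%:Z.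
  move=> i_out; rewrite mulnC.
  have [//|[t t_range blocked]] := cs_full_or_blocked h0 cs_step i (leqnn r).
  have [S [iS /eqP tS]] := htight t t_range i blocked.
  case/negP: i_out; apply: subsetP iS; apply: tight_sub_max_tight.
  apply: tight_le tS => // j; apply: (cs_le cs_step).
  by case/andP: t_range => _ ->; rewrite leqnn.
split.
  by split=> // i; rewrite (cs_ge0 h0 cs_step) // mulnC (cs_le_mul h0 cs_step).
move=> c' [c'_box c'_bounded]; rewrite /ilp_objective lerD2r.
apply: (sum_le_max_tight (@rhs_set0 n d) (@rhs_submod n d) cr_bounded c'_bounded).
by move=> i /cr_full ->; case/andP: (c'_box i).
Qed.
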